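(* Let the real variables be $c_{11},c_{22},c_{33},c_{44},c_{12},c_{23},c_{34},c_{41},s_{12},s_{23},s_{34},s_{41}$ (collectively $(c,s)$). Define $p_4=(c_{12}c_{34}-s_{12}s_{34})(c_{23}c_{41}-s_{23}s_{41})-(s_{12}c_{34}+c_{12}s_{34})(s_{23}c_{41}+c_{23}s_{41})-c_{11}c_{22}c_{33}c_{44}$, $p_{ij}=c_{ij}^2+s_{ij}^2-c_{ii}c_{jj}$ for $(i,j)\in\{(1,2),(2,3),(3,4),(4,1)\}$, $q_4^1=s_{12}c_{34}+c_{12}s_{34}+s_{23}c_{41}+c_{23}s_{41}$, $q_4^2=c_{12}c_{34}-s_{12}s_{34}-c_{23}c_{41}+s_{23}s_{41}$. Then $\{(c,s):p_4=p_{12}=p_{23}=p_{34}=p_{41}=0\}=\{(c,s):q_4^1=q_4^2=p_{12}=p_{23}=p_{34}=p_{41}=0\}$. *)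

From Stdlib Require Import Reals.
Open Scope R_scope.

Definition p4 (c11 c22 c33 c44 c12 c23 c34 c41 s12 s23 s34 s41 : R) : R :=
  (c12*c34 - s12*s34)*(c23*c41 - s23*s41)
  - (s12*c34 + c12*s34)*(s23*c41 + c23*s41)
  - c11*c22*c33*c44.

Definition pij (cij sij cii cjj : R) : R := cij^2 + sij^2 - cii*cjj.

Definition q41 (c12 c23 c34 c41 s12 s23 s34 s41 : R) : R :=
  s12*c34 + c12*s34 + s23*c41 + c23*s41.

Definition q42 (c12 c23 c34 c41 s12 s23 s34 s41 : R) : R :=
  c12*c34 - s12*s34 - c23*c41 + s23*s41.

(* On the circles [c_ij^2 + s_ij^2 = c_ii c_jj] one has the identity
   [(q4^1)^2 + (q4^2)^2 = -2 p4]; as a sum of two real squares vanishes exactly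
   when both squares do, [p4 = 0] is equivalent to [q4^1 = q4^2 = 0]. *)

From Stdlib Require Import Reals Lra.
Open Scope R_scope.

Lemma q41_sqr_add_q42_sqr c11 c22 c33 c44 c12 c23 c34 c41 s12 s23 s34 s41 :
  (q41 c12 c23 c34 c41 s12 s23 s34 s41)² + (q42 c12 c23 c34 c41 s12 s23 s34 s41)²
  = (c12^2 + s12^2) * (c34^2 + s34^2) + (c23^2 + s23^2) * (c41^2 + s41^2)
    - 2 * (c11 * c22 * c33 * c44)
    - 2 * p4 c11 c22 c33 c44 c12 c23 c34 c41 s12 s23 s34 s41.
Proof. unfold Rsqr, q41, q42, p4; ring. Qed.

Lemma q41_sqr_add_q42_sqr_on_circles c11 c22 c33 c44 c12 c23 c34 c41 s12 s23 s34 s41 :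
  pij c12 s12 c11 c22 = 0 -> pij c23 s23 c22 c33 = 0 ->
  pij c34 s34 c33 c44 = 0 -> pij c41 s41 c44 c11 = 0 ->
  (q41 c12 c23 c34 c41 s12 s23 s34 s41)² + (q42 c12 c23 c34 c41 s12 s23 s34 s41)²
  = -2 * p4 c11 c22 c33 c44 c12 c23 c34 c41 s12 s23 s34 s41.
Proof.
  unfold pij; intros H12 H23 H34 H41.
  rewrite (q41_sqr_add_q42_sqr c11 c22 c33 c44).
  replace (c12^2 + s12^2) with (c11 * c22) by lra.
  replace (c23^2 + s23^2) with (c22 * c33) by lra.
  replace (c34^2 + s34^2) with (c33 * c44) by lra.
  replace (c41^2 + s41^2) with (c44 * c11) by lra.
  ring.
Qed.

Theorem proposition6 :
  forall c11 c22 c33 c44 c12 c23 c34 c41 s12 s23 s34 s41 : R,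
    (p4 c11 c22 c33 c44 c12 c23 c34 c41 s12 s23 s34 s41 = 0 /\
     pij c12 s12 c11 c22 = 0 /\ pij c23 s23 c22 c33 = 0 /\
     pij c34 s34 c33 c44 = 0 /\ pij c41 s41 c44 c11 = 0)
    <->
    (q41 c12 c23 c34 c41 s12 s23 s34 s41 = 0 /\
     q42 c12 c23 c34 c41 s12 s23 s34 s41 = 0 /\
     pij c12 s12 c11 c22 = 0 /\ pij c23 s23 c22 c33 = 0 /\
     pij c34 s34 c33 c44 = 0 /\ pij c41 s41 c44 c11 = 0).
Proof.
  intros c11 c22 c33 c44 c12 c23 c34 c41 s12 s23 s34 s41.
  split.
  - intros (Hp4 & H12 & H23 & H34 & H41).
    pose proof (q41_sqr_add_q42_sqr_on_circles c11 c22 c33 c44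
                  c12 c23 c34 c41 s12 s23 s34 s41 H12 H23 H34 H41) as Hsum.
    rewrite Hp4, Rmult_0_r in Hsum.
    destruct (Rplus_sqr_eq_0 _ _ Hsum) as [Hq41 Hq42].
    tauto.
  - intros (Hq41 & Hq42 & H12 & H23 & H34 & H41).
    pose proof (q41_sqr_add_q42_sqr_on_circles c11 c22 c33 c44
                  c12 c23 c34 c41 s12 s23 s34 s41 H12 H23 H34 H41) as Hsum.
    rewrite Hq41, Hq42, Rsqr_0 in Hsum.
    repeat split; auto; lra.
Qed.
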